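(* Let $L$ be a finite graded lattice of rank $n$ with an $S_n$ EL-labeling, let $\mathfrak m$ be a maximal chain of $L$, and let $\mathfrak m'\in\mathcal{M}_{\mathfrak m}$. Then $Q_{\mathfrak m'}=L_{\mathfrak m'}$.
   Context: An $S_n$ EL-labeling: edge-labeling of covering pairs such that each interval has exactly one maximal chain with weakly increasing labels (bottom to top), lexicographically smallest among its maximal chains, and labels along each maximal chain form a permutation of $[n]$. $\mathfrak m_0$ denotes the unique maximal chain of $L$ whose labels are $1,2,\dots,n$ (the identity permutation). For a maximal chain $\mathfrak c$, $L_{\mathfrak c}$ is the sublattice of $L$ generated by $\mathfrak m_0$ and $\mathfrak c$. $U_i(\mathfrak c)$ ($i\in[n-1]$) is the unique maximal chain agreeing with $\mathfrak c$ except possibly at rank $i$ whose labels have no descent at position $i$. $\mathcal{M}_{\mathfrak c}$ is the set of all chains $U_{i_1}\cdots U_{i_r}(\mathfrak c)$ over all finite sequences (including empty), and $Q_{\mathfrak c}$ is the subposet of $L$ consisting of all elements lying on some chain in $\mathcal{M}_{\mathfrak c}$. *)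

From HB Require Import structures.
From mathcomp Require Import all_boot all_order.
Set Implicit Arguments. Unset Strict Implicit. Unset Printing Implicit Defensive.
Import Order.Theory.
Local Open Scope order_scope.

Section ELDefs.
Context {disp : Order.disp_t} {L : finTBLatticeType disp}.

Definition covers (x y : L) : bool :=
  (x < y) && [forall z : L, ~~ ((x < z) && (z < y))].

Definition maxchain_in (x y : L) (c : seq L) : Prop :=
  [/\ c != [::], head x c = x, last x c = y & path covers x (behead c)].

Definition maxchain (c : seq L) : Prop := maxchain_in \bot \top c.

Definition graded_rank (n : nat) : Prop :=
  forall c : seq L, maxchain c -> size c = n.+1.

Definition labels (lam : L -> L -> nat) (c : seq L) : seq nat :=
  if c is x :: s then pairmap lam x s else [::].

Fixpoint lexlt (s t : seq nat) : bool :=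
  match s, t with
  | x :: s', y :: t' => (x < y)%N || ((x == y) && lexlt s' t')
  | [::], _ :: _ => true
  | _, [::] => false
  end.

Definition EL_labeling (lam : L -> L -> nat) : Prop :=
  forall x y : L, x <= y ->
  exists c, [/\ maxchain_in x y c, sorted leq (labels lam c),
    (forall c', maxchain_in x y c' -> sorted leq (labels lam c') -> c' = c) &
    (forall c', maxchain_in x y c' -> c' <> c ->
       lexlt (labels lam c) (labels lam c'))].

Definition Sn_EL_labeling (n : nat) (lam : L -> L -> nat) : Prop :=
  EL_labeling lam /\
  forall c, maxchain c -> perm_eq (labels lam c) (iota 1 n).

(* d = U_i(c): maximal chain agreeing with c except possibly at rank i,
   whose labels have no descent at position i *)
Definition isU (lam : L -> L -> nat) (i : nat) (c d : seq L) : Prop :=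
  [/\ maxchain d, size d = size c,
      (forall j, j != i -> nth \bot d j = nth \bot c j) &
      (nth 0 (labels lam d) i.-1 <= nth 0 (labels lam d) i)%N].

(* M_c : chains U_{i1} ... U_{ir}(c), i_k in [n-1] *)
Inductive inM (n : nat) (lam : L -> L -> nat) (c : seq L) : seq L -> Prop :=
  | inM_refl : inM n lam c c
  | inM_step i d e : (1 <= i <= n.-1)%N -> inM n lam c d -> isU lam i d e ->
      inM n lam c e.

Definition inQ (n : nat) (lam : L -> L -> nat) (c : seq L) (x : L) : Prop :=
  exists2 d, inM n lam c d & x \in d.

Definition lattice_closed (S : {set L}) : bool :=
  [forall x in S, forall y in S, (x `&` y \in S) && (x `|` y \in S)].

Definition gen_sublattice (A : {set L}) : {set L} :=
  \bigcap_(S : {set L} | (A \subset S) && lattice_closed S) S.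

Definition Lgen (m0 c : seq L) : {set L} :=
  gen_sublattice [set x | (x \in m0) || (x \in c)].

End ELDefs.
Arguments graded_rank {disp} L n.

From HB Require Import structures.
From mathcomp Require Import all_boot all_order.
From mathcomp Require Import zify.
Set Implicit Arguments. Unset Strict Implicit. Unset Printing Implicit Defensive.
Import Order.Theory.
Local Open Scope order_scope.

(* Every element [x] carries the set [labs x] of labels of any saturated chain from
   [\bot] to [x]; comparable elements with equal label sets coincide, and the rank-[k]
   element of [m0] is the one with labels [1..k].  For a label [b], [gen b] meets the
   element of [m'] just above its [b]-labelled step with the rank-[b] element of [m0];
   [x] is spanned when it is the join of the [gen b], [b] in [labs x].  The elements of
   [m'] are spanned and every [U_i] preserves this, since a non-descent at rank [i]
   forces [gen] of the lower label below the middle element.  Conversely, for a label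
   set [P] closed under [b |-> labs (gen b)], bubble-sorting the labels of [m'] so that
   [P] comes first only swaps descents, i.e. applies [U_i]'s, and ends on a chain of
   [M_m'] through an element with label set [P].  Hence [Q_m'] is exactly the set of
   spanned elements: it is closed under meets and joins, contains [m0] and [m'], and
   consists of joins of meets of their elements. *)

Lemma take_pairmap (T1 T2 : Type) (f : T1 -> T1 -> T2) x s k :
  take k (pairmap f x s) = pairmap f x (take k s).
Proof. by elim: s x k => [|a s IH] x [|k] //=; rewrite IH. Qed.

Lemma pairmap_unsorted_split (T1 T2 : Type) (f : T1 -> T1 -> T2) (r : rel T2) x s :
  ~~ sorted r (pairmap f x s) -> exists s1 y1 y2 s2,
    s = s1 ++ y1 :: y2 :: s2 /\ ~~ r (f (last x s1) y1) (f y1 y2).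
Proof.
elim: s x => [|y [|y' s] IH] x //= /[dup] r_s.
rewrite negb_and => /orP[nr|/IH [s1 [y1 [y2 [s2 [-> nr]]]]]]; first by exists [::], y, y', s.
by exists (y :: s1), y1, y2, s2.
Qed.

Lemma sorted_rcons_max (l : seq nat) B b : sorted leq (rcons l B) -> b \in rcons l B -> (b <= B)%N.
Proof.
elim: l => [|a l IH] /=; first by rewrite inE => _ /eqP ->.
move=> so; rewrite inE => /orP[/eqP ->|bl]; last exact: IH (path_sorted so) bl.
by apply: (allP (order_path_min leq_trans so)); rewrite mem_rcons mem_head.
Qed.

Section FirstFilter.
Variables (T : eqType) (P : pred T).
Implicit Types (a b : T) (l : seq T).

(* [sorted (pfirst P) l]: every element of [l] satisfying [P] precedes every other one. *)
Definition pfirst : rel T := fun a b => P b ==> P a.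

(* The number of pairs of [l] in which an element outside [P] precedes one in [P]. *)
Fixpoint pinv l : nat :=
  if l is a :: l' then ((if P a then 0 else count P l') + pinv l')%N else 0%N.

Lemma pfirst_trans : transitive pfirst.
Proof. by move=> b a c /implyP ba /implyP cb; apply/implyP => /cb /ba. Qed.

Lemma take_count_pfirst l : sorted pfirst l -> take (count P l) l = filter P l.
Proof.
elim: l => [|a l IH] //= so; case Pa: (P a) => /=; first by rewrite IH // (path_sorted so).
have cnt0 : count P l = 0%N.
  apply/eqP; rewrite -leqn0 leqNgt -has_count; apply/hasPn => b.
  by move/(allP (order_path_min pfirst_trans so)); rewrite /pfirst Pa implybF.
by rewrite cnt0 take0; apply/esym/eqP; rewrite -size_eq0 size_filter cnt0.
Qed.

Lemma pinv_swap l1 a b l2 : ~~ P a -> P b ->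
  (pinv (l1 ++ b :: a :: l2) < pinv (l1 ++ a :: b :: l2))%N.
Proof.
move=> nPa Pb; elim: l1 => [|c l1 IH] /=; first by rewrite Pb (negbTE nPa) /=; lia.
have -> : count P (l1 ++ b :: a :: l2) = count P (l1 ++ a :: b :: l2).
  by rewrite !count_cat /=; congr (_ + _); exact: addnCA.
by rewrite ltn_add2l.
Qed.

End FirstFilter.

Lemma sorted_leq_pfirst k l : sorted leq l -> sorted (pfirst (fun b => b <= k)%N) l.
Proof. by apply: sub_sorted => a b ab; apply/implyP/leq_trans/ab. Qed.

Section CoverPaths.
Context {disp : Order.disp_t} {L : finTBLatticeType disp}.
Implicit Types (x y z : L) (s t : seq L).

Definition cpath x s y := path (@covers _ L) x s && (last x s == y).

Lemma covers_lt x y : covers x y -> x < y.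
Proof. by case/andP. Qed.

Lemma covers_between x y z : covers x y -> x <= z -> z <= y -> z = x \/ z = y.
Proof.
case/andP=> _ /forallP /(_ z); rewrite negb_and => H le_xz le_zy.
case: (eqVneq z x) => [->|nzx]; first by left.
case: (eqVneq z y) => [->|nzy]; first by right.
by move: H; rewrite !lt_neqAle le_xz le_zy eq_sym nzx nzy.
Qed.

Lemma cpath_le x s y : cpath x s y -> x <= y.
Proof.
elim: s x => [|a s IH] x /andP[/= p /eqP e]; first by rewrite e.
case/andP: p => /covers_lt/ltW le_xa p.
by apply: le_trans le_xa (IH _ _); rewrite /cpath p e eqxx.
Qed.

Lemma cpath_nil x y : cpath x [::] y -> x = y.
Proof. by case/andP=> _ /eqP. Qed.

Lemma cpath_cat x s y t z : cpath x s y -> cpath y t z -> cpath x (s ++ t) z.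
Proof.
case/andP=> p1 /eqP e1 /andP[p2 e2].
by rewrite /cpath cat_path p1 e1 p2 last_cat e1.
Qed.

Lemma cpath_take_drop x s y k : cpath x s y ->
  cpath x (take k s) (last x (take k s)) /\ cpath (last x (take k s)) (drop k s) y.
Proof.
case/andP; rewrite -{1}(cat_take_drop k s) cat_path => /andP[p1 p2] e.
split; first by rewrite /cpath p1 eqxx.
by rewrite /cpath p2 -last_cat cat_take_drop.
Qed.

Lemma cpath_take_le x s y k : cpath x s y -> last x (take k s) <= y.
Proof. by move/(cpath_take_drop k)=> [_ /cpath_le]. Qed.

Lemma cpath_take_ge x s y k : cpath x s y -> x <= last x (take k s).
Proof. by move/(cpath_take_drop k)=> [/cpath_le]. Qed.

Lemma cpath_take_mono x s y j k : (j <= k)%N -> cpath x s y ->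
  last x (take j s) <= last x (take k s).
Proof.
move=> le_jk /(cpath_take_drop k) [p _].
by have := cpath_take_le j p; rewrite take_takel.
Qed.

Lemma maxchain_inE x y c : maxchain_in x y c <-> exists2 s, c = x :: s & cpath x s y.
Proof.
split; first by case: c => [|a s] [] //= _ -> e p; exists s => //; rewrite /cpath p e eqxx.
by case=> s -> /andP[p /eqP e].
Qed.

Lemma mem_last_take x s k : last x (take k s) \in x :: s.
Proof.
have : last x (take k s) \in x :: take k s by rewrite mem_last.
by rewrite !inE => /orP[->//|/mem_take ->]; rewrite orbT.
Qed.

Lemma mem_last_takeP x s z : z \in x :: s ->
  exists2 k, (k <= size s)%N & z = last x (take k s).
Proof.
rewrite inE => /orP[/eqP ->|zs]; first by exists 0%N; rewrite ?take0.
exists (index z s).+1; first by rewrite index_mem.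
by rewrite (take_nth x) ?index_mem // last_rcons nth_index.
Qed.

Lemma lattice_closedP (G : {set L}) :
  reflect (forall x y, x \in G -> y \in G -> x `&` y \in G /\ x `|` y \in G)
    (lattice_closed G).
Proof.
apply: (iffP forall_inP) => [G_cl x y xG yG|G_cl x xG].
  by have /forall_inP/(_ y yG)/andP := G_cl x xG.
by apply/forall_inP => y yG; apply/andP; apply: G_cl.
Qed.

End CoverPaths.

Section Labels.
Context {disp : Order.disp_t} {L : finTBLatticeType disp}.
Implicit Types (x y z : L) (s t u : seq L).
Variables (n : nat) (lam : L -> L -> nat).
Hypothesis lamEL : EL_labeling lam.
Hypothesis lam_perm : forall c, maxchain c -> perm_eq (labels lam c) (iota 1 n).

Local Notation pm := (pairmap lam).

Lemma exists_sorted_cpath x y : x <= y -> exists s, [/\ cpath x s y, sorted leq (pm x s) &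
  forall s', cpath x s' y -> sorted leq (pm x s') -> s' = s].
Proof.
move=> /lamEL [_ [/maxchain_inE [s -> p_s] so uniq_so _]].
exists s; split=> // s' p_s' so'.
have mc : maxchain_in x y (x :: s') by apply/maxchain_inE; exists s'.
by case: (uniq_so _ mc so').
Qed.

Lemma exists_cpath x y : x <= y -> exists s, cpath x s y.
Proof. by move/exists_sorted_cpath=> [s [p _ _]]; exists s. Qed.

Lemma perm_labels_top s : cpath \bot s \top -> perm_eq (pm \bot s) (iota 1 n).
Proof. by move=> p; apply: (lam_perm (c := \bot :: s)); apply/maxchain_inE; exists s. Qed.

Lemma size_cpath_top s : cpath \bot s \top -> size s = n.
Proof. by move/perm_labels_top/perm_size; rewrite size_pairmap size_iota. Qed.

Lemma pairmap_cpath_cat x s t : cpath \bot s x -> pm \bot (s ++ t) = pm \bot s ++ pm x t.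
Proof. by case/andP=> _ /eqP e; rewrite pairmap_cat e. Qed.

Lemma perm_labels_cpath x s s' : cpath \bot s x -> cpath \bot s' x ->
  perm_eq (pm \bot s) (pm \bot s').
Proof.
move=> p p'; have [t pt] := exists_cpath (lex1 x).
have := perm_labels_top (cpath_cat p pt); have := perm_labels_top (cpath_cat p' pt).
rewrite (pairmap_cpath_cat t p) (pairmap_cpath_cat t p') => p1 p2.
by rewrite -(perm_cat2r (pm x t)) (permPl p2) perm_sym.
Qed.

Lemma labels_cpath_sub x s : cpath \bot s x ->
  uniq (pm \bot s) /\ {subset pm \bot s <= iota 1 n}.
Proof.
move=> p; have [t pt] := exists_cpath (lex1 x).
have := perm_labels_top (cpath_cat p pt); rewrite (pairmap_cpath_cat t p) => pst.
split; first by have := perm_uniq pst; rewrite iota_uniq cat_uniq => /andP[].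
by move=> b bs; rewrite -(perm_mem pst) mem_cat bs.
Qed.

Definition chain_to x : seq L := xchoose (exists_cpath (le0x x)).

(* Up to order, the labels of every saturated chain from [\bot] to [x] (labs_cpath). *)
Definition labs x : seq nat := pm \bot (chain_to x).

Lemma cpath_chain_to x : cpath \bot (chain_to x) x.
Proof. exact: (@xchooseP _ (fun s => cpath \bot s x)). Qed.

Lemma labs_cpath s x : cpath \bot s x -> perm_eq (labs x) (pm \bot s).
Proof. exact: perm_labels_cpath (cpath_chain_to x). Qed.

Lemma labs_uniq x : uniq (labs x).
Proof. by case: (labels_cpath_sub (cpath_chain_to x)). Qed.

Lemma labs_sub x : {subset labs x <= iota 1 n}.
Proof. by case: (labels_cpath_sub (cpath_chain_to x)). Qed.

Lemma labs_le_n x b : b \in labs x -> (b <= n)%N.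
Proof. by move/labs_sub; rewrite mem_iota add1n ltnS => /andP[]. Qed.

Lemma labs_cat x t y : cpath x t y -> perm_eq (labs y) (labs x ++ pm x t).
Proof.
move=> p; rewrite -(pairmap_cpath_cat t (cpath_chain_to x)).
exact/labs_cpath/(cpath_cat (cpath_chain_to x)).
Qed.

Lemma labs_covers x y : covers x y -> perm_eq (labs y) (labs x ++ [:: lam x y]).
Proof. by move=> c; apply: (labs_cat (t := [:: y])); rewrite /cpath /= c eqxx. Qed.

Lemma labs_le x y : x <= y -> {subset labs x <= labs y}.
Proof. by move=> /exists_cpath [t /labs_cat p] b bx; rewrite (perm_mem p) mem_cat bx. Qed.

Lemma labs_le_inj x y : x <= y -> {subset labs y <= labs x} -> x = y.
Proof.
move=> /exists_cpath [t p] sub.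
have := uniq_leq_size (labs_uniq y) sub.
rewrite (perm_size (labs_cat p)) size_cat size_pairmap.
case: t p => [|a t] p; first by rewrite (cpath_nil p).
by rewrite /= addnS ltnNge leq_addr.
Qed.

Lemma labs_top : perm_eq (labs \top) (iota 1 n).
Proof.
have [s p] := exists_cpath (lex1 (\bot : L)).
by rewrite (permPl (labs_cpath p)) perm_labels_top.
Qed.

Section BaseChain.
Variable s0 : seq L.
Hypothesis s0_cpath : cpath \bot s0 \top.
Hypothesis s0_labels : pm \bot s0 = iota 1 n.

Definition base k := last \bot (take k s0).

Lemma cpath_base k : cpath \bot (take k s0) (base k).
Proof. by case: (cpath_take_drop k s0_cpath). Qed.

Lemma base_mono j k : (j <= k)%N -> base j <= base k.
Proof. by move=> le_jk; apply: cpath_take_mono le_jk s0_cpath. Qed.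

Lemma labs_base k : (k <= n)%N -> perm_eq (labs (base k)) (iota 1 k).
Proof.
move=> kn; rewrite (permPl (labs_cpath (cpath_base k))) -take_pairmap s0_labels.
by rewrite take_iota (minn_idPl kn).
Qed.

Lemma mem_labs_base k b : (k <= n)%N -> (b \in labs (base k)) = (b \in iota 1 k).
Proof. by move=> kn; rewrite (perm_mem (labs_base kn)). Qed.

(* The sorted chain through [z] is the concatenation of the sorted chains
   [\bot -> z] and [z -> \top]; its labels are [1..n], so it is the base chain. *)
Lemma labs_base_inj z k : (k <= n)%N -> perm_eq (labs z) (iota 1 k) -> z = base k.
Proof.
move=> kn labs_z.
have [u [pu so_u _]] := exists_sorted_cpath (le0x z).
have lab_u : pm \bot u = iota 1 k.
  apply: (sorted_eq leq_trans anti_leq so_u (iota_sorted _ _)).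
  by rewrite -(permPl (labs_cpath pu)).
have [t [pt so_t _]] := exists_sorted_cpath (lex1 z).
have iota_split : iota 1 n = iota 1 k ++ iota (1 + k) (n - k) by rewrite -iotaD subnKC.
have lab_t : pm z t = iota (1 + k) (n - k).
  apply: (sorted_eq leq_trans anti_leq so_t (iota_sorted _ _)).
  have := perm_labels_top (cpath_cat pu pt).
  by rewrite (pairmap_cpath_cat t pu) lab_u iota_split perm_cat2l.
have [s [_ _ uniq_s]] := exists_sorted_cpath (le0x (\top : L)).
rewrite /base; have -> : s0 = u ++ t.
  rewrite (uniq_s _ s0_cpath) ?s0_labels ?iota_sorted //.
  apply/esym/uniq_s; first exact: cpath_cat pu pt.
  by rewrite (pairmap_cpath_cat t pu) lab_u lab_t -iota_split iota_sorted.
have size_u : size u = k by rewrite -(size_pairmap lam \bot) lab_u size_iota.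
by rewrite -size_u take_size_cat //; case/andP: pu => _ /eqP.
Qed.

Lemma base_le k w : (k <= n)%N -> {subset iota 1 k <= labs w} -> base k <= w.
Proof.
move=> kn sub.
have [u [pu so_u _]] := exists_sorted_cpath (le0x w).
set l := pm \bot u.
have [uniq_l sub_l] := labels_cpath_sub pu.
have small_l : perm_eq (filter (fun b => b <= k)%N l) (iota 1 k).
  apply: uniq_perm; rewrite ?filter_uniq ?iota_uniq // => b.
  rewrite mem_filter mem_iota add1n ltnS; apply/andP/andP=> [[bk /sub_l]|[b1 bk]].
    by rewrite mem_iota => /andP[-> _].
  split=> //; rewrite -(perm_mem (labs_cpath pu)); apply: sub.
  by rewrite mem_iota b1 add1n ltnS.
have cnt : count (fun b => b <= k)%N l = k.
  by rewrite -size_filter (perm_size small_l) size_iota.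
suff -> : base k = last \bot (take k u) by apply: cpath_take_le pu.
apply/esym/labs_base_inj => //; have [p _] := cpath_take_drop k pu.
by rewrite (permPl (labs_cpath p)) -take_pairmap -/l -{1}cnt take_count_pfirst ?sorted_leq_pfirst.
Qed.

Lemma le_base k w : (k <= n)%N -> {subset labs w <= iota 1 k} -> w <= base k.
Proof.
move=> kn sub.
have [t [pt so_t _]] := exists_sorted_cpath (lex1 w).
set l := pm w t; set j := count (fun b => b <= k)%N l.
suff -> : base k = last w (take j t) by apply: cpath_take_ge pt.
apply/esym/labs_base_inj => //.
have [p _] := cpath_take_drop j pt.
apply: uniq_perm; rewrite ?labs_uniq ?iota_uniq // => b.
have b_top : (b \in labs w) || (b \in l) = (0 < b <= n)%N.
  by rewrite -mem_cat -(perm_mem (labs_cat pt)) (perm_mem labs_top) mem_iota add1n ltnS.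
rewrite (perm_mem (labs_cat p)) -take_pairmap -/l /j take_count_pfirst ?sorted_leq_pfirst //.
rewrite mem_cat mem_filter mem_iota add1n ltnS.
apply/idP/idP => [/orP[/sub|/andP[bk bl]]|/andP[b1 bk]].
- by rewrite mem_iota add1n ltnS.
- by move: b_top; rewrite bl orbT bk => /esym/andP[-> _].
have : (0 < b <= n)%N by rewrite b1 (leq_trans bk kn).
by rewrite -b_top => /orP[-> //|bl]; rewrite bk bl orbT.
Qed.

(* Otherwise [b] labels the sorted chain from [u := v `&` base k] to [v]; its first
   step [u -> y] then has label [<= b <= k], which forces [y <= base k], so [y <= u]. *)
Lemma labs_meet_base v k b : (k <= n)%N ->
  b \in labs v -> (b <= k)%N -> b \in labs (v `&` base k).
Proof.
move=> kn bv bk; set u := v `&` base k.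
apply/negPn/negP => bNu.
have [t [pt so_t _]] := exists_sorted_cpath (leIl v (base k)).
have bt : b \in pm u t by move: bv; rewrite (perm_mem (labs_cat pt)) mem_cat (negbTE bNu).
case: t pt so_t bt => [|y t] //= /andP[/= /andP[c_uy p_yt] e_t] so_t bt.
have le_ab : (lam u y <= b)%N.
  move: bt; rewrite inE => /orP[/eqP -> //|bt].
  exact: (allP (order_path_min leq_trans so_t)).
have l_uy := labs_covers c_uy.
have y_base : y <= base k.
  apply: le_base => // c; rewrite (perm_mem l_uy) mem_cat => /orP[cu|].
    by rewrite -(mem_labs_base _ kn); apply: (labs_le (leIr (base k) v)).
  rewrite inE => /eqP ->; rewrite mem_iota add1n ltnS (leq_trans le_ab bk) andbT.
  have : lam u y \in labs y by rewrite (perm_mem l_uy) mem_cat mem_head orbT.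
  by move/labs_sub; rewrite mem_iota => /andP[].
have y_v : y <= v by apply: (cpath_le (s := t)); rewrite /cpath p_yt e_t.
have : y <= u by rewrite lexI y_v y_base.
by rewrite (lt_geF (covers_lt c_uy)).
Qed.

Lemma labs_join_base v k b : (k <= n)%N ->
  b \in labs (v `|` base k) -> b \notin labs v -> (b <= k)%N.
Proof.
move=> kn bu bNv; set u := v `|` base k.
have [t [pt so_t _]] := exists_sorted_cpath (leUl v (base k)).
have bt : b \in pm v t by move: bu; rewrite (perm_mem (labs_cat pt)) mem_cat (negbTE bNv).
case/lastP: t pt so_t bt => [|t y] //=.
rewrite /cpath rcons_path last_rcons => /andP[/andP[p_t c_y] /eqP ey]; subst y.
set y := last v t in c_y *.
rewrite -cats1 pairmap_cat /= -/y cats1 => so_t bt.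
have le_b := sorted_rcons_max so_t bt.
rewrite leqNgt; apply/negP => lt_kb.
have l_yu := labs_covers c_y.
have base_y : base k <= y.
  apply: base_le => // c ci.
  have : c \in labs u by apply: (labs_le (leUr (base k) v)); rewrite mem_labs_base.
  rewrite (perm_mem l_yu) mem_cat inE => /orP[//|/eqP ec].
  by move: ci; rewrite ec mem_iota add1n ltnS (leqNgt _ k) (leq_trans lt_kb le_b) andbF.
have v_y : v <= y by apply: (cpath_le (s := t)); rewrite /cpath p_t eqxx.
have : u <= y by rewrite leUx v_y base_y.
by rewrite (lt_geF (covers_lt c_y)).
Qed.

Section Chain.
Variable cs : seq L.
Hypothesis cs_cpath : cpath \bot cs \top.
Local Notation lc := (pm \bot cs).

Definition cs_at k := last \bot (take k cs).

(* [cs_at (index b lc).+1] is the element of [cs] just above its step labelled [b]. *)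
Definition gen b := cs_at (index b lc).+1 `&` base b.

Definition hull (T : seq nat) := \join_(b <- T) gen b.

Definition spanned x := hull (labs x) == x.

Lemma labs_cs_at k : perm_eq (labs (cs_at k)) (take k lc).
Proof.
have [p _] := cpath_take_drop k cs_cpath.
by rewrite (permPl (labs_cpath p)) take_pairmap.
Qed.

Lemma mem_labs_gen b : b \in iota 1 n -> b \in labs (gen b).
Proof.
move=> bi; have b_lc : b \in lc by rewrite (perm_mem (perm_labels_top cs_cpath)).
apply: labs_meet_base.
- by move: bi; rewrite mem_iota add1n ltnS => /andP[].
- by rewrite (perm_mem (labs_cs_at _)) in_take.
- by [].
Qed.

Lemma hull_le T z : (forall b, b \in T -> gen b <= z) -> hull T <= z.
Proof. by move=> le_gen; apply/joinsP_seq => b /le_gen. Qed.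

Lemma gen_le_hull T b : b \in T -> gen b <= hull T.
Proof. by move=> bT; apply: joins_sup_seq. Qed.

Lemma spannedP x : reflect (forall b, b \in labs x -> gen b <= x) (spanned x).
Proof.
apply: (iffP eqP) => [e b bx|le_gen]; first by rewrite -e gen_le_hull.
apply: labs_le_inj; first exact: hull_le.
move=> b bx; apply: (labs_le (gen_le_hull bx)).
exact/mem_labs_gen/(labs_sub bx).
Qed.

Lemma spanned_cs_at k : spanned (cs_at k).
Proof.
apply/spannedP => b; rewrite (perm_mem (labs_cs_at k)) => /index_ltn lt_bk.
exact: le_trans (leIl _ _) (cpath_take_mono lt_bk cs_cpath).
Qed.

Lemma spanned_base k : (k <= n)%N -> spanned (base k).
Proof.
move=> kn; apply/spannedP => b; rewrite mem_labs_base // mem_iota add1n ltnS.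
by case/andP=> _ bk; apply: le_trans (leIr _ _) (base_mono bk).
Qed.

(* With [a := lam xm y <= b := lam y xp]: if [w := xp `&` base a] were not below [y],
   then [y `|` w = xp], so [b] would be a label of [y `|` base a] missing from [y],
   whence [b <= a] and [a = b], although [a] labels [y] and [b] does not. *)
Lemma gen_le_between xm y xp : covers xm y -> covers y xp ->
  (lam xm y <= lam y xp)%N -> gen (lam xm y) <= xp -> gen (lam xm y) <= y.
Proof.
set a := lam xm y; set b := lam y xp => c_xm_y c_y_xp le_ab gen_xp.
have l_y := labs_covers c_xm_y; have l_xp := labs_covers c_y_xp.
have a_y : a \in labs y by rewrite (perm_mem l_y) mem_cat mem_head orbT.
have b_y : b \notin labs y.
  have := labs_uniq xp; rewrite (perm_uniq l_xp) cat_uniq /= orbF andbT.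
  by case/andP.
set w := xp `&` base a.
have gen_w : gen a <= w by rewrite lexI gen_xp leIr.
suff w_y : w <= y by apply: le_trans gen_w w_y.
have y_yw : y <= y `|` w := leUl _ _.
have yw_xp : y `|` w <= xp by rewrite leUx (ltW (covers_lt c_y_xp)) leIl.
case: (covers_between c_y_xp y_yw yw_xp) => [<-|yw_eq]; first exact: leUr.
have yw_ya : y `|` w <= y `|` base a by rewrite leUx leUl (le_trans (leIr _ _) (leUr _ _)).
have b_join : b \in labs (y `|` base a).
  by apply: (labs_le yw_ya); rewrite yw_eq (perm_mem l_xp) mem_cat mem_head orbT.
have le_ba := labs_join_base (labs_le_n a_y) b_join b_y.
have eq_ba : b = a by apply/anti_leq; rewrite le_ba le_ab.
by move: b_y; rewrite eq_ba a_y.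
Qed.

Lemma spanned_between xm y xp : spanned xm -> spanned xp ->
  covers xm y -> covers y xp -> (lam xm y <= lam y xp)%N -> spanned y.
Proof.
move=> /spannedP sp_xm /spannedP sp_xp c_xm_y c_y_xp le_lab.
have lt_y_xp := covers_lt c_y_xp.
apply/spannedP => c; rewrite (perm_mem (labs_covers c_xm_y)) mem_cat inE.
case/orP=> [/sp_xm c_xm|/eqP ->]; first exact: le_trans c_xm (ltW (covers_lt c_xm_y)).
apply: (gen_le_between c_xm_y c_y_xp le_lab); apply: sp_xp; apply: (labs_le (ltW lt_y_xp)).
by rewrite (perm_mem (labs_covers c_xm_y)) mem_cat mem_head orbT.
Qed.

Lemma maxchain_nth d j : maxchain d -> (j < n)%N ->
  covers (nth \bot d j) (nth \bot d j.+1) /\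
  nth 0%N (labels lam d) j = lam (nth \bot d j) (nth \bot d j.+1).
Proof.
case/maxchain_inE=> u -> pu ju; have size_u := size_cpath_top pu.
case/andP: pu => p_u _; rewrite -size_u in ju.
by split; [exact: (pathP \bot p_u) | rewrite /labels (nth_pairmap \bot)].
Qed.

Lemma spanned_U i d e : (1 <= i <= n.-1)%N -> maxchain d -> {in d, forall x, spanned x} ->
  isU lam i d e -> {in e, forall x, spanned x}.
Proof.
move=> /andP[i1 i2] md sp_d [me size_e agree le_lab] x xe.
have size_d : size d = n.+1.
  by case/maxchain_inE: md => u -> /size_cpath_top /= ->.
have -> : x = nth \bot e (index x e) by rewrite nth_index.
case: (eqVneq (index x e) i) => [->|ne_i]; last first.
  by rewrite agree // sp_d // mem_nth // -size_e index_mem.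
have in_d j : j != i -> (j <= n)%N -> nth \bot e j \in d.
  by move=> ne_ji jn; rewrite agree // mem_nth // size_d ltnS.
have [i_lt j_lt] : (i < n)%N /\ (i.-1 < n)%N by lia.
have [c_lo l_lo] := maxchain_nth me j_lt; rewrite prednK // in c_lo l_lo.
have [c_hi l_hi] := maxchain_nth me i_lt.
by apply: (spanned_between _ _ c_lo c_hi); rewrite -?l_lo -?l_hi //;
  apply: sp_d; apply: in_d; lia.
Qed.

Lemma inM_spanned d : inM n lam (\bot :: cs) d -> maxchain d /\ {in d, forall x, spanned x}.
Proof.
elim=> [|i {}d e i_range _ [md sp_d] dUe]; last first.
  by split; [case: dUe | exact: spanned_U i_range md sp_d dUe].
split; first by apply/maxchain_inE; exists cs.
by move=> x /mem_last_takeP [k _ ->]; apply: spanned_cs_at.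
Qed.

(* A descent [a > b] on [x -> y1 -> y2] is undone by the sorted chain of [[x, y2]],
   which has the same two labels in increasing order. *)
Lemma swap_covers x y1 y2 : covers x y1 -> covers y1 y2 -> (lam y1 y2 < lam x y1)%N ->
  exists z, [/\ covers x z, covers z y2, lam x z = lam y1 y2 & lam z y2 = lam x y1].
Proof.
set a := lam x y1; set b := lam y1 y2 => c_x_y1 c_y1_y2 lt_ba.
have p12 : cpath x [:: y1; y2] y2 by rewrite /cpath /= c_x_y1 c_y1_y2 eqxx.
have [t [pt so_t _]] := exists_sorted_cpath (cpath_le p12).
have perm_t : perm_eq (pm x t) [:: b; a].
  rewrite -(perm_cat2l (labs x)) -(permPl (labs_cat pt)) (permPl (labs_cat p12)).
  by rewrite perm_cat2l /= perm_sym (perm_catC [:: b] [:: a]).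
case: t pt so_t perm_t => [|z [|y [|? ?]]] pt so_t perm_t;
  try by move/perm_size: perm_t; rewrite size_pairmap.
case/andP: pt => /= /and3P[c_x_z c_z_y _] /eqP ey; subst y.
exists z; suff [-> ->] : lam x z = b /\ lam z y2 = a by [].
have [] // : [:: lam x z; lam z y2] = [:: b; a].
by apply: (sorted_eq leq_trans anti_leq so_t); rewrite //= andbT ltnW.
Qed.

Lemma swap_step u1 y1 y2 u2 : cpath \bot (u1 ++ y1 :: y2 :: u2) \top ->
  (lam y1 y2 < lam (last \bot u1) y1)%N ->
  exists z, [/\ cpath \bot (u1 ++ z :: y2 :: u2) \top,
    isU lam (size u1).+1 (\bot :: u1 ++ y1 :: y2 :: u2) (\bot :: u1 ++ z :: y2 :: u2) &
    pm \bot (u1 ++ z :: y2 :: u2) =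
      pm \bot u1 ++ lam y1 y2 :: lam (last \bot u1) y1 :: pm y2 u2].
Proof.
set x := last \bot u1 => p lt_lab.
move: (p); rewrite /cpath cat_path last_cat /= -/x.
case/andP=> /andP[p_u1 /and3P[c_x_y1 c_y1_y2 p_u2]] e_u2.
have [z [c_x_z c_z_y2 l_xz l_zy2]] := swap_covers c_x_y1 c_y1_y2 lt_lab.
have p' : cpath \bot (u1 ++ z :: y2 :: u2) \top.
  by rewrite /cpath cat_path last_cat /= -/x p_u1 c_x_z c_z_y2 p_u2.
have lab' : pm \bot (u1 ++ z :: y2 :: u2) = pm \bot u1 ++ lam y1 y2 :: lam x y1 :: pm y2 u2.
  by rewrite pairmap_cat /= -/x l_xz l_zy2.
exists z; split=> //; split=> /=.
- by apply/maxchain_inE; exists (u1 ++ z :: y2 :: u2).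
- by rewrite !size_cat.
- move=> j ne_j; rewrite -!cat_cons !nth_cat /=.
  case: ltnP => // le_j; case E: (j - (size u1).+1)%N => [|k] //.
  by move: ne_j; rewrite eqn_leq le_j -subn_eq0 E.
- rewrite /labels lab' nth_cat size_pairmap ltnn subnn /=.
  by rewrite nth_cat size_pairmap ltnNge leqnSn /= subSn // subnn /= ltnW.
Qed.

Local Notation inQc := (inQ n lam (\bot :: cs)).

Section Realize.
Variable P : pred nat.
Hypothesis P_sub : forall b, P b -> b \in iota 1 n.
Hypothesis P_gen : forall b c, P b -> c \in labs (gen b) -> P c.

Definition pgood (l : seq nat) := pairwise (fun a b => ~~ P a && P b ==> (b < a)%N) l.

Lemma pgood_swap l1 a b l2 : P b -> pgood (l1 ++ a :: b :: l2) -> pgood (l1 ++ b :: a :: l2).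
Proof.
move=> Pb; rewrite /pgood !pairwise_cat => /and3P[r12 p1 /= /andP[/andP[rab ->] /andP[-> ->]]].
rewrite Pb p1 andbT /= andbT; move: r12; apply: sub_all => x /=.
by rewrite andbCA.
Qed.

Lemma pgood_labels_cs : pgood lc.
Proof.
apply/(pairwiseP 0%N) => i j; rewrite !inE => il jl lt_ij.
apply/implyP => /andP[nPa Pb]; rewrite ltnNge; apply/negP => le_ab.
move/negP: nPa; apply; apply: (P_gen Pb).
have uniq_lc := (labels_cpath_sub cs_cpath).1.
rewrite /gen index_uniq //; apply: labs_meet_base => //.
- by have := P_sub Pb; rewrite mem_iota add1n ltnS => /andP[].
- by rewrite (perm_mem (labs_cs_at _)) in_take ?mem_nth // index_uniq // ltnW.
Qed.

Lemma realize_sorted u : inM n lam (\bot :: cs) (\bot :: u) -> cpath \bot u \top ->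
  sorted (pfirst P) (pm \bot u) -> exists2 z, inQc z & forall b, (b \in labs z) = P b.
Proof.
move=> Mu pu so; set l := pm \bot u; set k := count P l.
exists (last \bot (take k u)); first by exists (\bot :: u) => //; apply: mem_last_take.
move=> b; have [p _] := cpath_take_drop k pu.
rewrite (perm_mem (labs_cpath p)) -take_pairmap take_count_pfirst // mem_filter.
by case Pb: (P b); rewrite //= (perm_mem (perm_labels_top pu)) P_sub.
Qed.

(* Bubble sort towards [sorted (pfirst P)]: goodness makes every offending adjacent
   pair a descent, which [U_i] swaps. *)
Lemma realize_pgood u : inM n lam (\bot :: cs) (\bot :: u) -> pgood (pm \bot u) ->
  exists2 z, inQc z & forall b, (b \in labs z) = P b.
Proof.
have [N] := ubnP (pinv P (pm \bot u)); elim: N u => // N IH u lt_inv Mu good.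
have pu : cpath \bot u \top by case: (inM_spanned Mu) => /maxchain_inE [_ [<-]].
case: (boolP (sorted (pfirst P) (pm \bot u))) => [so|nso]; first exact: realize_sorted Mu pu so.
have [u1 [y1 [y2 [u2 [eu]]]]] := pairmap_unsorted_split nso.
rewrite /pfirst negb_imply => /andP[Pb nPa].
rewrite eu pairmap_cat /= in good lt_inv; rewrite eu in pu Mu.
have lt_lab : (lam y1 y2 < lam (last \bot u1) y1)%N.
  by move: good; rewrite /pgood pairwise_cat /= Pb nPa => /and3P[_ _ /andP[/andP[]]].
have [z [pz uz lab_z]] := swap_step pu lt_lab.
apply: (IH (u1 ++ z :: y2 :: u2)).
- rewrite lab_z; exact: leq_trans (pinv_swap (pm \bot u1) (pm y2 u2) nPa Pb) lt_inv.
- apply: (inM_step _ Mu uz); have := size_cpath_top pu.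
  by rewrite size_cat /= => <-; rewrite !addnS /= ltnS leq_addr.
- by rewrite lab_z; apply: pgood_swap.
Qed.

Lemma realize : exists2 z, inQc z & forall b, (b \in labs z) = P b.
Proof. exact/realize_pgood/pgood_labels_cs/inM_refl. Qed.

End Realize.

Lemma inQ_spanned x : inQc x -> spanned x.
Proof. by case=> d /inM_spanned [_ sp_d] /sp_d. Qed.

Lemma spanned_le x y : spanned x -> spanned y -> {subset labs x <= labs y} -> x <= y.
Proof.
move=> /eqP e /spannedP sp_y sub; rewrite -e; apply: hull_le => b bx; exact/sp_y/sub.
Qed.

Lemma realize_spanned (P : pred nat) : (forall b, P b -> b \in iota 1 n) ->
  (forall b c, P b -> c \in labs (gen b) -> P c) ->
  exists2 z, spanned z & forall b, (b \in labs z) = P b.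
Proof. by move=> P_sub P_gen; have [z /inQ_spanned] := realize P_sub P_gen; exists z. Qed.

Lemma spanned_inQ x : spanned x -> inQc x.
Proof.
move=> sp_x; have /spannedP gen_x := sp_x.
have [|z Qz labs_z] := realize (P := fun b => b \in labs x) (@labs_sub x).
  by move=> b c bx; apply: (labs_le (gen_x b bx)).
suff -> : x = z by [].
have sp_z := inQ_spanned Qz.
by apply/le_anti; rewrite !spanned_le // => b; rewrite labs_z.
Qed.

Lemma spanned_meet x y : spanned x -> spanned y -> spanned (x `&` y).
Proof.
move=> sp_x sp_y; have /spannedP gen_x := sp_x; have /spannedP gen_y := sp_y.
have [||z sp_z labs_z] := realize_spanned (P := fun b => (b \in labs x) && (b \in labs y)).
- by move=> b /andP[/labs_sub].
- by move=> b c /andP[bx b_y] c_gen; rewrite (labs_le (gen_x b bx) c_gen) (labs_le (gen_y b b_y) c_gen).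
have z_xy : z <= x `&` y.
  by rewrite lexI !spanned_le // => b; rewrite labs_z => /andP[].
suff <- : z = x `&` y by [].
apply: (labs_le_inj z_xy) => b bxy; rewrite labs_z.
by rewrite (labs_le (leIl x y) bxy) (labs_le (leIr y x) bxy).
Qed.

Lemma spanned_join x y : spanned x -> spanned y -> spanned (x `|` y).
Proof.
move=> sp_x sp_y; have /spannedP gen_x := sp_x; have /spannedP gen_y := sp_y.
have [||z sp_z labs_z] := realize_spanned (P := fun b => (b \in labs x) || (b \in labs y)).
- by move=> b /orP[] /labs_sub.
- move=> b c /orP[bx|b_y] c_gen; first by rewrite (labs_le (gen_x b bx) c_gen).
  by rewrite (labs_le (gen_y b b_y) c_gen) orbT.
have xy_z : x `|` y <= z.
  by rewrite leUx !spanned_le // => b bS; rewrite labs_z bS ?orbT.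
suff -> : x `|` y = z by [].
apply: (labs_le_inj xy_z) => b; rewrite labs_z => /orP[bx|b_y].
  exact: (labs_le (leUl x y)).
exact: (labs_le (leUr y x)).
Qed.

Lemma hull_in (G : {set L}) T : lattice_closed G -> \bot \in G ->
  (forall b, gen b \in G) -> hull T \in G.
Proof.
move=> /lattice_closedP G_closed bot_G gen_G.
by apply: (big_ind (fun z => z \in G)) => // x y xG yG; case: (G_closed x y xG yG).
Qed.

Lemma spanned_Lgen x : spanned x -> x \in Lgen (\bot :: s0) (\bot :: cs).
Proof.
move=> /eqP <-; apply/bigcapP => G /andP[/subsetP gens /[dup] G_closed /lattice_closedP G_cl].
have in_G y : (y \in \bot :: s0) || (y \in \bot :: cs) -> y \in G.
  by move=> y_gen; apply: gens; rewrite inE.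
apply: hull_in => //; first by apply: in_G; rewrite mem_head.
by move=> b; apply: (G_cl _ _ (in_G _ _) (in_G _ _)).1; rewrite mem_last_take ?orbT.
Qed.

Lemma Lgen_spanned x : x \in Lgen (\bot :: s0) (\bot :: cs) -> spanned x.
Proof.
suff : x \in Lgen (\bot :: s0) (\bot :: cs) -> x \in [set y | spanned y] by rewrite inE.
move/bigcapP; apply; apply/andP; split.
  apply/subsetP => y; rewrite !inE => /orP[] /mem_last_takeP [k k_size ->].
    by apply: spanned_base; rewrite -(size_cpath_top s0_cpath).
  exact: spanned_cs_at.
apply/lattice_closedP => y z; rewrite !inE => sp_y sp_z.
by split; [apply: spanned_meet | apply: spanned_join].
Qed.

Lemma inQ_Lgen x : inQc x <-> x \in Lgen (\bot :: s0) (\bot :: cs).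
Proof.
split=> [/inQ_spanned/spanned_Lgen //|/Lgen_spanned]; exact: spanned_inQ.
Qed.

End Chain.
End BaseChain.
End Labels.

Theorem mainTheorem8 (disp : Order.disp_t) (L : finTBLatticeType disp)
  (n : nat) (lam : L -> L -> nat) (m0 m m' : seq L) :
  graded_rank L n ->
  Sn_EL_labeling n lam ->
  maxchain m0 -> labels lam m0 = iota 1 n ->
  maxchain m ->
  inM n lam m m' ->
  forall x : L, inQ n lam m' x <-> x \in Lgen m0 m'.
Proof.
move=> _ [lamEL lam_perm] /maxchain_inE [s0 -> s0_cpath] s0_labels Mm Mm' x.
have /maxchain_inE [cs -> cs_cpath] : maxchain m' by elim: Mm' => // i d e _ _ _ [].
exact: (inQ_Lgen lamEL lam_perm s0_cpath s0_labels cs_cpath x).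
Qed.
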